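(* Let $0\to(M,\alpha_M)\xrightarrow{t}(G,\alpha_G)\xrightarrow{p}(Q,\mathrm{Id}_Q)\to0$ be a split short exact sequence of $\alpha$-perfect Hom-Leibniz algebras with splitting homomorphism $s$, $p\circ s=\mathrm{Id}_Q$, and suppose the induced Hom-action of $Q$ on $M$, $q\cdot m=t^{-1}[s(q),t(m)]$, $m\cdot q=t^{-1}[t(m),s(q)]$, is symmetric: $q\cdot m+m\cdot q=0$. Let $\tau=\mathfrak{uce}_\alpha(t):\mathfrak{uce}_\alpha(M)\to\mathfrak{uce}_\alpha(G)$, $\sigma=\mathfrak{uce}_\alpha(s):\mathfrak{uce}(Q)\to\mathfrak{uce}_\alpha(G)$, $\sigma\{q_1,q_2\}=\{s(q_1),s(q_2)\}$, and $\pi=\mathfrak{uce}_\alpha(p)$. Then: 1. $\tau(\mathfrak{uce}_\alpha(M))=\mathrm{Ker}\,\pi$ is a two-sided Hom-ideal of $\mathfrak{uce}_\alpha(G)$, $\sigma(\mathfrak{uce}(Q))$ is a Hom-subalgebra on which $\overline{\alpha_G}$ is the identity, $\mathfrak{uce}_\alpha(G)=\tau(\mathfrak{uce}_\alpha(M))\oplus\sigma(\mathfrak{uce}(Q))$ as vector spaces, and $\mathfrak{uce}_\alpha(G)\cong\tau(\mathfrak{uce}_\alpha(M))\rtimes\sigma(\mathfrak{uce}(Q))$ with the Hom-action given by the bracket of $\mathfrak{uce}_\alpha(G)$. 2. $\sigma$ is an isomorphism of $(\mathfrak{uce}(Q),\mathrm{Id})$ onto $\sigma(\mathfrak{uce}(Q))$.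 3. $\mathrm{Ker}(U^G_\alpha)=\tau(\mathrm{Ker}\,U^M_\alpha)\oplus\sigma(HL_2(Q))$. 4. The formulas $\{q_1,q_2\}\cdot\{\alpha_M(m_1),\alpha_M(m_2)\}=\{[q_1,q_2]\cdot\alpha_M(m_1),\alpha_M^2(m_2)\}-\{[q_1,q_2]\cdot\alpha_M(m_2),\alpha_M^2(m_1)\}$ and $\{\alpha_M(m_1),\alpha_M(m_2)\}\cdot\{q_1,q_2\}=\{\alpha_M(m_1)\cdot[q_1,q_2],\alpha_M^2(m_2)\}-\{\alpha_M^2(m_1),[q_1,q_2]\cdot\alpha_M(m_2)\}$ define a Hom-action of $(\mathfrak{uce}(Q),\mathrm{Id})$ on $(\mathfrak{uce}_\alpha(M),\overline{\alpha_M})$; the map $\tau\rtimes\sigma:\mathfrak{uce}_\alpha(M)\rtimes\mathfrak{uce}(Q)\to\mathfrak{uce}_\alpha(G)$, $(x,y)\mapsto\tau(x)+\sigma(y)$, is a surjective homomorphism; and $\Phi:=U^G_\alpha\circ(\tau\rtimes\sigma)$, i.e. $\Phi(\{\alpha_M(m_1),\alpha_M(m_2)\},\{q_1,q_2\})=t[\alpha_M(m_1),\alpha_M(m_2)]+s[q_1,q_2]$, is a surjective homomorphism onto $(G,\alpha_G)$ with $\mathrm{Ker}\,\Phi=\mathrm{Ker}(U^M_\alpha)\oplus HL_2(Q)$. 5. $\mathrm{Ker}(\tau\rtimes\sigma)=\big(\mathfrak{uce}(Q)\cdot\mathrm{Ker}(U^M_\alpha)+\mathrm{Ker}(U^M_\alpha)\cdot\mathfrak{uce}(Q)\big)\oplus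 0$, where the products denote the spans of the actions above.
   Context: Hom-Leibniz algebras are multiplicative: $(L,\alpha_L)$ is a $\mathbb{K}$-vector space with bilinear bracket and linear $\alpha_L$ such that $[\alpha_L(x),[y,z]]=[[x,y],\alpha_L(z)]-[[x,z],\alpha_L(y)]$ and $\alpha_L[x,y]=[\alpha_L(x),\alpha_L(y)]$; homomorphisms preserve brackets and commute with structure maps. $(L,\alpha_L)$ is $\alpha$-perfect if $L=[\alpha_L(L),\alpha_L(L)]$ (for $(Q,\mathrm{Id}_Q)$ this means $Q=[Q,Q]$). A Hom-action of $(L,\alpha_L)$ on $(M,\alpha_M)$ is a pair of bilinear maps $x\otimes m\mapsto x\cdot m$, $m\otimes x\mapsto m\cdot x$ with, for all $x,y\in L$, $m,m'\in M$: $\alpha_M(m)\cdot[x,y]=(m\cdot x)\cdot\alpha_L(y)-(m\cdot y)\cdot\alpha_L(x)$; $\alpha_L(x)\cdot(m\cdot y)=(x\cdot m)\cdot\alpha_L(y)-[x,y]\cdot\alpha_M(m)$; $\alpha_L(x)\cdot(y\cdot m)=[x,y]\cdot\alpha_M(m)-(x\cdot m)\cdot\alpha_L(y)$; $\alpha_L(x)\cdot[m,m']=[x\cdot m,\alpha_M(m')]-[x\cdot m',\alpha_M(m)]$; $[\alpha_M(m),m'\cdot x]=[m,m']\cdot\alpha_L(x)-[m\cdot x,\alpha_M(m')]$; $[\alpha_M(m),x\cdot m']=[m\cdot x,\alpha_M(m')]-[m,m']\cdot\alpha_L(x)$; $\alpha_M(x\cdot m)=\alpha_L(x)\cdot\alpha_M(m)$;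 $\alpha_M(m\cdot x)=\alpha_M(m)\cdot\alpha_L(x)$. The semi-direct product $M\rtimes L$ is $M\oplus L$ with $\widetilde\alpha(m,l)=(\alpha_M(m),\alpha_L(l))$ and $[(m_1,l_1),(m_2,l_2)]=([m_1,m_2]+\alpha_L(l_1)\cdot m_2+m_1\cdot\alpha_L(l_2),[l_1,l_2])$. For $\alpha$-perfect $(L,\alpha_L)$: $I_L\subseteq\alpha_L(L)\otimes\alpha_L(L)$ is spanned by $-[x_1,x_2]\otimes\alpha_L(x_3)+[x_1,x_3]\otimes\alpha_L(x_2)+\alpha_L(x_1)\otimes[x_2,x_3]$; $\mathfrak{uce}_\alpha(L)=(\alpha_L(L)\otimes\alpha_L(L))/I_L$ with classes $\{\alpha_L(x_1),\alpha_L(x_2)\}$, bracket $[\{a,b\},\{c,e\}]=\{[a,b],[c,e]\}$, endomorphism $\overline{\alpha_L}\{\alpha_L(x_1),\alpha_L(x_2)\}=\{\alpha_L^2(x_1),\alpha_L^2(x_2)\}$, and $U^L_\alpha\{a,b\}=[a,b]$, the universal $\alpha$-central extension of $L$. For $Q$ with $\mathrm{Id}_Q$ this gives $\mathfrak{uce}(Q)=(Q\otimes Q)/I_Q$ with identity endomorphism, $u_Q\{q_1,q_2\}=[q_1,q_2]$, and $HL_2(Q)=\mathrm{Ker}\,u_Q$. For a homomorphism $g$, $\mathfrak{uce}_\alpha(g)\{\alpha(x_1),\alpha(x_2)\}=\{\alpha(g(x_1)),\alpha(g(x_2))\}$. *)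

(* Hom-Leibniz algebras over a field K, modelled on
   K-vector spaces (lmodType K) with a bracket and a structure map given as
   plain functions plus the axioms of the paper. *)
From HB Require Import structures.
From mathcomp Require Import all_boot all_order all_algebra.
Set Implicit Arguments. Unset Strict Implicit. Unset Printing Implicit Defensive.
Import GRing.Theory.
Local Open Scope ring_scope.

Section HomLeibniz.
Variable K : fieldType.

Definition is_lin (V W : lmodType K) (f : V -> W) : Prop :=
  forall (a : K) x y, f (a *: x + y) = a *: f x + f y.

Definition bilin (V W X : lmodType K) (f : V -> W -> X) : Prop :=
  (forall y, is_lin (fun x => f x y)) /\ (forall x, is_lin (f x)).

Inductive in_span (V : lmodType K) (P : V -> Prop) : V -> Prop :=
| span0 : in_span P 0
| spanS : forall (a : K) x v, P x -> in_span P v -> in_span P (a *: x + v).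

Definition hom_leibniz (L : lmodType K) (br : L -> L -> L) (al : L -> L) : Prop :=
  [/\ bilin br, is_lin al,
      (forall x y z, br (al x) (br y z) = br (br x y) (al z) - br (br x z) (al y))
    & (forall x y, al (br x y) = br (al x) (al y))].

Definition alpha_perfect (L : lmodType K) (br : L -> L -> L) (al : L -> L) : Prop :=
  forall x, in_span (fun v => exists a b, v = br (al a) (al b)) x.

Definition hl_hom (L1 L2 : lmodType K) (br1 : L1 -> L1 -> L1) (al1 : L1 -> L1)
  (br2 : L2 -> L2 -> L2) (al2 : L2 -> L2) (f : L1 -> L2) : Prop :=
  [/\ is_lin f, (forall x y, f (br1 x y) = br2 (f x) (f y))
    & (forall x, f (al1 x) = al2 (f x))].

(* Hom-action of (L,alL) on (M,alM), relativised to subsets PL of L and PM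
   of M (use predicates that are always True for the ordinary notion).
   la x m = x . m ,  ra m x = m . x *)
Definition hom_action_on (L M : lmodType K) (PL : L -> Prop) (PM : M -> Prop)
  (brL : L -> L -> L) (alL : L -> L) (brM : M -> M -> M) (alM : M -> M)
  (la : L -> M -> M) (ra : M -> L -> M) : Prop :=
  [/\ (forall x m, PL x -> PM m -> PM (la x m) /\ PM (ra m x)),
      (forall (a : K) x y m, PL x -> PL y -> PM m ->
          la (a *: x + y) m = a *: la x m + la y m /\
          ra m (a *: x + y) = a *: ra m x + ra m y),
      (forall (a : K) x m m', PL x -> PM m -> PM m' ->
          la x (a *: m + m') = a *: la x m + la x m' /\
          ra (a *: m + m') x = a *: ra m x + ra m' x)
    & (forall x y m m', PL x -> PL y -> PM m -> PM m' ->
       (ra (alM m) (brL x y) = ra (ra m x) (alL y) - ra (ra m y) (alL x)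
    /\ la (alL x) (ra m y) = ra (la x m) (alL y) - la (brL x y) (alM m)
    /\ la (alL x) (la y m) = la (brL x y) (alM m) - ra (la x m) (alL y)
    /\ la (alL x) (brM m m') = brM (la x m) (alM m') - brM (la x m') (alM m)
    /\ brM (alM m) (ra m' x) = ra (brM m m') (alL x) - brM (ra m x) (alM m')
    /\ brM (alM m) (la x m') = brM (ra m x) (alM m') - ra (brM m m') (alL x)
    /\ alM (la x m) = la (alL x) (alM m)
    /\ alM (ra m x) = ra (alM m) (alL x)))].

Definition hom_action (L M : lmodType K)
  (brL : L -> L -> L) (alL : L -> L) (brM : M -> M -> M) (alM : M -> M)
  (la : L -> M -> M) (ra : M -> L -> M) : Prop :=
  hom_action_on (fun _ => True) (fun _ => True) brL alL brM alM la ra.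

Definition sd_br (L M : lmodType K) (brM : M -> M -> M) (brL : L -> L -> L)
  (alL : L -> L) (la : L -> M -> M) (ra : M -> L -> M) (p1 p2 : M * L) : M * L :=
  (brM p1.1 p2.1 + la (alL p1.2) p2.1 + ra p1.1 (alL p2.2), brL p1.2 p2.2).

Definition sd_al (L M : lmodType K) (alM : M -> M) (alL : L -> L) (p : M * L) : M * L :=
  (alM p.1, alL p.2).

(* The I_L-relation for a bilinear map f on alpha(L) x alpha(L) = L x L
   (for alpha-perfect L, alpha is onto, so alpha(L) = L). *)
Definition kills_IL (L W : lmodType K) (br : L -> L -> L) (al : L -> L)
  (f : L -> L -> W) : Prop :=
  forall x1 x2 x3,
    - f (br x1 x2) (al x3) + f (br x1 x3) (al x2) + f (al x1) (br x2 x3) = 0.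

(* uce_alpha(L) = (alpha(L) (x) alpha(L)) / I_L, given through the universal
   property of this quotient of the tensor product: ucls a b = {a,b} is
   bilinear, kills I_L, spans, and every bilinear map killing I_L factors
   linearly through it. *)
Record uce_data (L : lmodType K) (br : L -> L -> L) (al : L -> L) := UceData {
  uce_T : lmodType K;
  ucls : L -> L -> uce_T;
  ucls_bilin : bilin ucls;
  ucls_rel : kills_IL br al ucls;
  ucls_univ : forall (W : lmodType K) (f : L -> L -> W), bilin f -> kills_IL br al f ->
                exists h : uce_T -> W, is_lin h /\ forall a b, h (ucls a b) = f a b;
  ucls_span : forall u, in_span (fun v => exists a b, v = ucls a b) u;
  ubr : uce_T -> uce_T -> uce_T;
  ubr_bilin : bilin ubr;
  ubr_cls : forall a b c e, ubr (ucls a b) (ucls c e) = ucls (br a b) (br c e);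
  ual : uce_T -> uce_T;
  ual_lin : is_lin ual;
  ual_cls : forall a b, ual (ucls a b) = ucls (al a) (al b);
  uU : uce_T -> L;
  uU_lin : is_lin uU;
  uU_cls : forall a b, uU (ucls a b) = br a b }.

Definition uce_map (L1 L2 : lmodType K) (br1 : L1 -> L1 -> L1) (al1 : L1 -> L1)
  (br2 : L2 -> L2 -> L2) (al2 : L2 -> L2)
  (D1 : uce_data br1 al1) (D2 : uce_data br2 al2) (g : L1 -> L2)
  (h : uce_T D1 -> uce_T D2) : Prop :=
  is_lin h /\ forall a b, h (ucls D1 a b) = ucls D2 (g a) (g b).

End HomLeibniz.

Arguments uce_T {K L br al}.
Arguments ucls {K L br al}.
Arguments ubr {K L br al}.
Arguments ual {K L br al}.
Arguments uU {K L br al}.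
Arguments uce_map {K L1 L2 br1 al1 br2 al2}.

From HB Require Import structures.
From mathcomp Require Import all_boot all_order all_algebra.
From Stdlib Require Import ClassicalEpsilon FunctionalExtensionality PropExtensionality.
Set Implicit Arguments. Unset Strict Implicit. Unset Printing Implicit Defensive.
Import GRing.Theory.
Local Open Scope ring_scope.

(* Writing every g in G as t m + s (p g), each
   class {g1, g2} of uce(G) splits as tau(y) + sigma(z); pi kills the image
   of tau and is a left inverse of sigma, so the sum is direct (parts 1-3).
   The action of Q on M is a derivation compatible with alpha (the image of s
   is fixed by alpha_G); it lifts, through the universal property of
   uce_alpha(M), to a Hom-action of uce(Q) on uce_alpha(M) for which
   (y, z) |-> tau y + sigma z is an onto homomorphism from the semi-direct
   product (part 4).  For part 5, the first component of the semi-direct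
   bracket, taken modulo the span of the actions on Ker U_M, descends along
   the onto homomorphism U_G o (tau x| sigma) to a bilinear map on G killing
   I_G, hence to a linear map h on uce(G) with h o tau = the quotient map. *)

(* A reflexive decision procedure for identities in abelian groups: both
   sides are reified into formal sums of atoms, normalised to integer
   coefficient lists, and compared by computation.  Scalar multiples
   [c *: x], brackets, etc. are treated as opaque atoms. *)
Inductive aexp := AAtom of nat | AZero | AAdd of aexp & aexp | AOpp of aexp.

Section AbelianNormalisation.
Variable V : zmodType.

Fixpoint aeval (env : seq V) (e : aexp) : V :=
  match e with
  | AAtom n => nth 0 env n
  | AZero => 0
  | AAdd a b => aeval env a + aeval env b
  | AOpp a => - aeval env a
  end.

Fixpoint evalnf (env : seq V) (s : seq int) : V :=
  match s with [::] => 0 | c :: s' => head 0 env *~ c + evalnf (behead env) s' end.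

Fixpoint addnf (s1 s2 : seq int) : seq int :=
  match s1, s2 with
  | [::], _ => s2
  | _, [::] => s1
  | x :: s1', y :: s2' => (x + y) :: addnf s1' s2'
  end.

Fixpoint nf (e : aexp) : seq int :=
  match e with
  | AAtom n => rcons (nseq n 0) 1
  | AZero => [::]
  | AAdd a b => addnf (nf a) (nf b)
  | AOpp a => map -%R (nf a)
  end.

Lemma evalnf_add env s1 s2 : evalnf env (addnf s1 s2) = evalnf env s1 + evalnf env s2.
Proof.
elim: s1 s2 env => [|x s1 IH] [|y s2] env /=; rewrite ?add0r ?addr0 //.
by rewrite IH mulrzDr addrACA.
Qed.

Lemma evalnf_opp env s : evalnf env (map -%R s) = - evalnf env s.
Proof. by elim: s env => [|x s IH] env /=; rewrite ?oppr0 // IH mulrNz opprD. Qed.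

Lemma evalnf_atom env n : evalnf env (rcons (nseq n 0) 1) = nth 0 env n.
Proof.
elim: n env => [|n IH] [|x env] /=; rewrite ?mulr1z ?addr0 ?mulr0z ?add0r //.
by rewrite IH; case: n {IH}.
Qed.

Lemma aeval_nf env e : aeval env e = evalnf env (nf e).
Proof.
elim: e => [n||a IHa b IHb|a IH] /=; rewrite ?evalnf_atom ?evalnf_add ?evalnf_opp.
- by [].
- by [].
- by rewrite IHa IHb.
- by rewrite IH.
Qed.

Lemma evalnf_zero env s : all (fun c => c == 0) s -> evalnf env s = 0.
Proof. by elim: s env => [|x s IH] env //= /andP[/eqP-> /IH->]; rewrite mulr0z addr0. Qed.

Lemma abel_sound env e1 e2 :
  all (fun c => c == 0) (addnf (nf e1) (map -%R (nf e2))) ->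
  aeval env e1 = aeval env e2.
Proof.
move=> H; apply/eqP; rewrite -subr_eq0 !aeval_nf -evalnf_opp -evalnf_add.
by rewrite evalnf_zero.
Qed.
End AbelianNormalisation.

Ltac alen l := lazymatch l with
  | nil => constr:(0%nat)
  | _ :: ?l' => let n := alen l' in constr:(S n) end.
Ltac alookup x l := lazymatch l with
  | ?y :: ?l' =>
    let b := match constr:(tt) with
             | _ => let _ := constr:(erefl x : x = y) in constr:(true)
             | _ => constr:(false) end in
    lazymatch b with true => alen l' | false => alookup x l' end
  end.
Ltac areify env t :=
  lazymatch t with
  | @GRing.add _ ?a ?b =>
      let r1 := areify env a in
      lazymatch r1 with (?env1, ?e1) =>
      let r2 := areify env1 b in
      lazymatch r2 with (?env2, ?e2) => constr:((env2, AAdd e1 e2)) end end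
  | @GRing.opp _ ?a =>
      let r1 := areify env a in
      lazymatch r1 with (?env1, ?e1) => constr:((env1, AOpp e1)) end
  | @GRing.zero _ => constr:((env, AZero))
  | _ => match constr:(tt) with
         | _ => let n := alookup t env in constr:((env, AAtom n))
         | _ => let n := alen env in constr:((t :: env, AAtom n))
         end
  end.
Ltac abel :=
  lazymatch goal with
  | |- @eq ?T ?l ?r =>
    let V := constr:(T : zmodType) in
    let r1 := areify (@nil T) l in
    lazymatch r1 with (?env1, ?e1) =>
    let r2 := areify env1 r in
    lazymatch r2 with (?env2, ?e2) =>
      change (aeval (rev env2) e1 = aeval (rev env2) e2);
      apply: abel_sound; vm_compute; reflexivity
    end end
  end.

Section LinearAlgebra.
Variable K : fieldType.

Section LinearMap.
Variables (V W : lmodType K) (f : V -> W).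
Hypothesis f_lin : is_lin f.

Lemma lin0 : f 0 = 0.
Proof.
have := f_lin 1 0 0; rewrite !scale1r addr0 => /eqP.
by rewrite -subr_eq subrr eq_sym => /eqP.
Qed.

Lemma linD x y : f (x + y) = f x + f y.
Proof. by have := f_lin 1 x y; rewrite !scale1r. Qed.

Lemma linZ c x : f (c *: x) = c *: f x.
Proof. by have := f_lin c x 0; rewrite !addr0 lin0 addr0. Qed.

Lemma linN x : f (- x) = - f x.
Proof. by rewrite -scaleN1r linZ scaleN1r. Qed.

Lemma linB x y : f (x - y) = f x - f y.
Proof. by rewrite linD linN. Qed.
End LinearMap.

Section BilinearMap.
Variables (U V W : lmodType K) (b : U -> V -> W).
Hypothesis b_bilin : bilin b.

Lemma bil0l y : b 0 y = 0. Proof. exact: (lin0 (b_bilin.1 y)). Qed.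
Lemma bil0r x : b x 0 = 0. Proof. exact: (lin0 (b_bilin.2 x)). Qed.
Lemma bilDl x x' y : b (x + x') y = b x y + b x' y. Proof. exact: (linD (b_bilin.1 y)). Qed.
Lemma bilDr x y y' : b x (y + y') = b x y + b x y'. Proof. exact: (linD (b_bilin.2 x)). Qed.
Lemma bilNl x y : b (- x) y = - b x y. Proof. exact: (linN (b_bilin.1 y)). Qed.
Lemma bilNr x y : b x (- y) = - b x y. Proof. exact: (linN (b_bilin.2 x)). Qed.
Lemma bilZl c x y : b (c *: x) y = c *: b x y. Proof. exact: (linZ (b_bilin.1 y)). Qed.
Lemma bilZr c x y : b x (c *: y) = c *: b x y. Proof. exact: (linZ (b_bilin.2 x)). Qed.
End BilinearMap.

Lemma is_lin_id (V : lmodType K) : is_lin (fun x : V => x).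
Proof. by []. Qed.

Lemma is_lin_zero (V W : lmodType K) : is_lin (fun _ : V => (0 : W)).
Proof. by move=> c x y; rewrite scaler0 addr0. Qed.

Lemma is_lin_comp (U V W : lmodType K) (f : V -> W) (g : U -> V) :
  is_lin f -> is_lin g -> is_lin (fun x => f (g x)).
Proof. by move=> Hf Hg c x y; rewrite Hg Hf. Qed.

Lemma is_lin_add (V W : lmodType K) (f g : V -> W) :
  is_lin f -> is_lin g -> is_lin (fun x => f x + g x).
Proof. by move=> Hf Hg c x y; rewrite Hf Hg scalerDr; abel. Qed.

Lemma is_lin_sub (V W : lmodType K) (f g : V -> W) :
  is_lin f -> is_lin g -> is_lin (fun x => f x - g x).
Proof. by move=> Hf Hg c x y; rewrite Hf Hg scalerBr; abel. Qed.

Lemma bilin_comp (U V W X : lmodType K) (f : W -> X) (b : U -> V -> W) :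
  is_lin f -> bilin b -> bilin (fun x y => f (b x y)).
Proof. by move=> Hf [Hb1 Hb2]; split=> [y|x]; exact: is_lin_comp Hf _. Qed.

Section Span.
Variables (V : lmodType K) (P : V -> Prop).

Lemma span_gen x : P x -> in_span P x.
Proof. by move=> Px; rewrite -[x]addr0 -[x]scale1r; apply: spanS => //; apply: span0. Qed.

Lemma span_add x y : in_span P x -> in_span P y -> in_span P (x + y).
Proof.
elim=> [|a u v Pu _ IH] Hy; first by rewrite add0r.
by rewrite -addrA; apply: spanS => //; apply: IH.
Qed.

Lemma span_scale c x : in_span P x -> in_span P (c *: x).
Proof.
elim=> [|a u v Pu _ IH]; first by rewrite scaler0; apply: span0.
by rewrite scalerDr scalerA; apply: spanS.
Qed.

Lemma span_opp x : in_span P x -> in_span P (- x).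
Proof. by move=> Hx; rewrite -scaleN1r; apply: span_scale. Qed.

Lemma span_sub x y : in_span P x -> in_span P y -> in_span P (x - y).
Proof. by move=> Hx Hy; apply: span_add => //; apply: span_opp. Qed.

Lemma lin_span (W : lmodType K) (f g : V -> W) : is_lin f -> is_lin g ->
  (forall x, P x -> f x = g x) -> forall x, in_span P x -> f x = g x.
Proof.
move=> Hf Hg Hfg x; elim=> [|c u v Pu _ IH]; first by rewrite (lin0 Hf) (lin0 Hg).
by rewrite Hf Hg IH Hfg.
Qed.
End Span.
End LinearAlgebra.


Section QuotientBySpan.
Variables (K : fieldType) (V : lmodType K) (P : V -> Prop).
Local Notation N := (in_span P).

Definition canon (x : V) : V := epsilon (inhabits 0) (fun y => N (y - x)).

Lemma canon_rel x : N (canon x - x).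
Proof.
apply: (epsilon_spec (inhabits 0) (fun y => N (y - x))).
by exists x; rewrite subrr; apply: span0.
Qed.

Lemma canon_eq x y : N (x - y) -> canon x = canon y.
Proof.
move=> Nxy; rewrite /canon; congr epsilon.
apply: functional_extensionality => z; apply: propositional_extensionality.
have -> : z - y = (z - x) + (x - y) by abel.
split=> Nz; first exact: span_add.
have -> : z - x = (z - x + (x - y)) - (x - y) by abel.
exact: span_sub.
Qed.

Lemma canon_eqN x y : canon x = canon y -> N (x - y).
Proof.
move=> Exy; have -> : x - y = - (canon x - x) + (canon y - y) by rewrite Exy; abel.
by apply: span_add; [apply: span_opp|]; apply: canon_rel.
Qed.

Lemma canonK x : canon (canon x) = canon x.
Proof. exact/canon_eq/canon_rel. Qed.

Definition qT := {x : V | canon x == x}.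
HB.instance Definition _ := [isSub for (@sval V (fun x => canon x == x))].
HB.instance Definition _ := [Choice of qT by <:].

Definition qmk (x : V) : qT := exist _ (canon x) (introT eqP (canonK x)).

Lemma qmk_val (w : qT) : qmk (val w) = w.
Proof. by apply: val_inj => /=; case: w => x /= /eqP. Qed.

Lemma qmk_eq x y : N (x - y) -> qmk x = qmk y.
Proof. by move=> Nxy; apply: val_inj => /=; apply: canon_eq. Qed.

Lemma qmk_eqN x y : qmk x = qmk y -> N (x - y).
Proof. by move=> Exy; apply: canon_eqN; have := congr1 val Exy. Qed.

Lemma qmk_rel x : N (val (qmk x) - x).
Proof. exact: canon_rel. Qed.

Definition qzero : qT := qmk 0.
Definition qadd (a b : qT) : qT := qmk (val a + val b).
Definition qopp (a : qT) : qT := qmk (- val a).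
Definition qscale (c : K) (a : qT) : qT := qmk (c *: val a).

Lemma qaddA : associative qadd.
Proof.
move=> a b c; apply: qmk_eq.
have -> : val a + val (qadd b c) - (val (qadd a b) + val c)
  = (val (qmk (val b + val c)) - (val b + val c))
    - (val (qmk (val a + val b)) - (val a + val b)) by abel.
by apply: span_sub; apply: qmk_rel.
Qed.

Lemma qaddC : commutative qadd.
Proof. by move=> a b; rewrite /qadd addrC. Qed.

Lemma qadd0 : left_id qzero qadd.
Proof.
move=> a; rewrite /qadd -[in RHS](qmk_val a); apply: qmk_eq.
have -> : val qzero + val a - val a = val (qmk 0) - 0 by abel.
exact: qmk_rel.
Qed.

Lemma qaddN : left_inverse qzero qopp qadd.
Proof.
move=> a; apply: qmk_eq; rewrite subr0.
have -> : val (qopp a) + val a = val (qmk (- val a)) - (- val a) by abel.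
exact: qmk_rel.
Qed.
HB.instance Definition _ := GRing.isZmodule.Build qT qaddA qaddC qadd0 qaddN.

Lemma qscaleA c d (a : qT) : qscale c (qscale d a) = qscale (c * d) a.
Proof. by apply: qmk_eq; rewrite -scalerA -scalerBr; apply/span_scale/qmk_rel. Qed.

Lemma qscale1 : left_id 1 qscale.
Proof. by move=> a; rewrite /qscale scale1r qmk_val. Qed.

Lemma qscaleDr c : {morph qscale c : a b / a + b}.
Proof.
move=> a b; apply: qmk_eq.
change (N (c *: val (qmk (val a + val b))
           - (val (qmk (c *: val a)) + val (qmk (c *: val b))))).
have -> : c *: val (qmk (val a + val b)) - (val (qmk (c *: val a)) + val (qmk (c *: val b)))
  = c *: (val (qmk (val a + val b)) - (val a + val b))
    - (val (qmk (c *: val a)) - c *: val a) - (val (qmk (c *: val b)) - c *: val b).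
  by rewrite scalerBr scalerDr; abel.
by apply: span_sub; [apply: span_sub; [apply: span_scale|]|]; apply: qmk_rel.
Qed.

Lemma qscaleDl (a : qT) : {morph qscale^~ a : c d / c + d}.
Proof.
move=> c d; apply: qmk_eq.
change (N ((c + d) *: val a - (val (qmk (c *: val a)) + val (qmk (d *: val a))))).
have -> : (c + d) *: val a - (val (qmk (c *: val a)) + val (qmk (d *: val a)))
  = - (val (qmk (c *: val a)) - c *: val a) - (val (qmk (d *: val a)) - d *: val a).
  by rewrite scalerDl; abel.
by apply: span_sub; [apply: span_opp|]; apply: qmk_rel.
Qed.
HB.instance Definition _ :=
  GRing.Zmodule_isLmodule.Build K qT qscaleA qscale1 qscaleDr qscaleDl.

Lemma quotient_by_span : exists (W : lmodType K) (f : V -> W),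
  is_lin f /\ forall x, f x = 0 <-> N x.
Proof.
exists qT, qmk; split=> [c x y|x].
- apply: qmk_eq.
  change (N (c *: x + y - (val (qmk (c *: val (qmk x))) + val (qmk y)))).
  have -> : c *: x + y - (val (qmk (c *: val (qmk x))) + val (qmk y))
    = - (val (qmk (c *: val (qmk x))) - c *: val (qmk x))
      - c *: (val (qmk x) - x) - (val (qmk y) - y).
    by rewrite scalerBr; abel.
  by apply: span_sub; [apply: span_sub; [apply: span_opp|apply: span_scale]|];
    apply: qmk_rel.
- by split=> Hx; [rewrite -[x]subr0; apply: qmk_eqN | apply: qmk_eq; rewrite subr0].
Qed.
End QuotientBySpan.

Section HomLeibnizAxioms.
Variables (K : fieldType) (L : lmodType K) (br : L -> L -> L) (al : L -> L).
Hypothesis HL : hom_leibniz br al.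

Lemma hl_bilin : bilin br. Proof. by case: HL. Qed.
Lemma hl_lin : is_lin al. Proof. by case: HL. Qed.
Lemma hl_leib x y z : br (al x) (br y z) = br (br x y) (al z) - br (br x z) (al y).
Proof. by case: HL. Qed.
Lemma hl_mult x y : al (br x y) = br (al x) (al y). Proof. by case: HL. Qed.
End HomLeibnizAxioms.

Section Homomorphisms.
Variables (K : fieldType) (L1 L2 : lmodType K).
Variables (br1 : L1 -> L1 -> L1) (al1 : L1 -> L1) (br2 : L2 -> L2 -> L2) (al2 : L2 -> L2).
Variables (g : L1 -> L2).
Hypothesis Hg : hl_hom br1 al1 br2 al2 g.

Lemma hom_lin : is_lin g. Proof. by case: Hg. Qed.
Lemma hom_br x y : g (br1 x y) = br2 (g x) (g y). Proof. by case: Hg. Qed.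
Lemma hom_al x : g (al1 x) = al2 (g x). Proof. by case: Hg. Qed.

Lemma hl_hom_comp (L3 : lmodType K) (br3 : L3 -> L3 -> L3) (al3 : L3 -> L3) (f : L2 -> L3) :
  hl_hom br2 al2 br3 al3 f -> hl_hom br1 al1 br3 al3 (fun x => f (g x)).
Proof.
case=> f1 f2 f3; split=> [|x y|x]; first exact (is_lin_comp f1 hom_lin).
- by rewrite hom_br f2.
- by rewrite hom_al f3.
Qed.
End Homomorphisms.

Section UniversalCentralExtension.
Variables (K : fieldType) (L : lmodType K) (br : L -> L -> L) (al : L -> L).
Hypothesis HL : hom_leibniz br al.
Variable D : uce_data br al.
Local Notation cl := (ucls D).

Lemma uce_ext (W : lmodType K) (f g : uce_T D -> W) : is_lin f -> is_lin g ->
  (forall a b, f (cl a b) = g (cl a b)) -> forall X, f X = g X.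
Proof.
move=> Hf Hg Hfg X; apply: (lin_span Hf Hg _ (ucls_span X)).
by move=> x [a [b ->]].
Qed.

Lemma ubrE X Y : ubr D X Y = cl (uU D X) (uU D Y).
Proof.
have brcl : forall a b Y, ubr D (cl a b) Y = cl (br a b) (uU D Y).
  move=> a b; apply: uce_ext; first exact: (ubr_bilin D).2.
  - exact (is_lin_comp ((ucls_bilin D).2 _) (@uU_lin _ _ _ _ D)).
  - by move=> c e; rewrite ubr_cls uU_cls.
move: X; apply: uce_ext; first exact: (ubr_bilin D).1.
- exact (is_lin_comp ((ucls_bilin D).1 (uU D Y)) (@uU_lin _ _ _ _ D)).
- by move=> a b; rewrite brcl uU_cls.
Qed.

Lemma uU_br X Y : uU D (ubr D X Y) = br (uU D X) (uU D Y).
Proof. by rewrite ubrE uU_cls. Qed.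

Lemma uU_al X : uU D (ual D X) = al (uU D X).
Proof.
move: X; apply: uce_ext.
- exact (is_lin_comp (@uU_lin _ _ _ _ D) (@ual_lin _ _ _ _ D)).
- exact (is_lin_comp (hl_lin HL) (@uU_lin _ _ _ _ D)).
- by move=> a b; rewrite ual_cls !uU_cls (hl_mult HL).
Qed.

Lemma cls_rel x1 x2 x3 :
  cl (al x1) (br x2 x3) = cl (br x1 x2) (al x3) - cl (br x1 x3) (al x2).
Proof. by apply/eqP; rewrite -subr_eq0; apply/eqP; rewrite -(ucls_rel D x1 x2 x3); abel. Qed.

Lemma uce_hl : hom_leibniz (ubr D) (ual D).
Proof.
split=> [||X Y Z|X Y]; [exact: ubr_bilin|exact: ual_lin| |].
- by rewrite !ubrE !uU_cls !uU_al cls_rel.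
- by rewrite !ubrE uU_al ual_cls !uU_al.
Qed.

Lemma uU_hom : hl_hom (ubr D) (ual D) br al (uU D).
Proof. by split; [exact: uU_lin|exact: uU_br|exact: uU_al]. Qed.

Lemma uce_hl_id : (forall x, al x = x) -> hom_leibniz (ubr D) (fun X => X).
Proof.
move=> al_id; have ual_id X : ual D X = X.
  by move: X; apply: uce_ext => // [|a b]; [exact: ual_lin|rewrite ual_cls !al_id].
have [b1 b2 b3 b4] := uce_hl; split=> // X Y Z; by have := b3 X Y Z; rewrite !ual_id.
Qed.

Lemma perfect_surj : alpha_perfect br al -> forall x, exists X, uU D X = x.
Proof.
move=> HP x; elim: (HP x) => [|c u v [a [b ->]] _ [X HX]].
- by exists 0; rewrite (lin0 (@uU_lin _ _ _ _ D)).
- by exists (c *: cl (al a) (al b) + X); rewrite uU_lin uU_cls HX.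
Qed.

Section InducedMap.
Variables (W : lmodType K) (f : L -> L -> W).
Hypotheses (f_bilin : bilin f) (f_kills : kills_IL br al f).

Definition uce_induced : uce_T D -> W :=
  proj1_sig (constructive_indefinite_description _ (ucls_univ D f_bilin f_kills)).

Lemma uce_induced_lin : is_lin uce_induced.
Proof.
exact: (proj2_sig (constructive_indefinite_description _ (ucls_univ D f_bilin f_kills))).1.
Qed.

Lemma uce_induced_cls a b : uce_induced (cl a b) = f a b.
Proof.
exact: (proj2_sig (constructive_indefinite_description _ (ucls_univ D f_bilin f_kills))).2.
Qed.
End InducedMap.
End UniversalCentralExtension.

Section UceFunctor.
Variables (K : fieldType) (L1 L2 : lmodType K).
Variables (br1 : L1 -> L1 -> L1) (al1 : L1 -> L1) (br2 : L2 -> L2 -> L2) (al2 : L2 -> L2).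
Variables (D1 : uce_data br1 al1) (D2 : uce_data br2 al2).
Variables (g : L1 -> L2) (h : uce_T D1 -> uce_T D2).
Hypotheses (Hg : hl_hom br1 al1 br2 al2 g) (Hh : uce_map D1 D2 g h).

Lemma um_lin : is_lin h. Proof. by case: Hh. Qed.
Lemma um_cls a b : h (ucls D1 a b) = ucls D2 (g a) (g b). Proof. by case: Hh. Qed.

Lemma um_uU X : uU D2 (h X) = g (uU D1 X).
Proof.
move: X; apply: uce_ext.
- exact (is_lin_comp (@uU_lin _ _ _ _ D2) um_lin).
- exact (is_lin_comp (hom_lin Hg) (@uU_lin _ _ _ _ D1)).
- by move=> a b; rewrite um_cls !uU_cls (hom_br Hg).
Qed.

Lemma um_br X Y : h (ubr D1 X Y) = ubr D2 (h X) (h Y).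
Proof. by rewrite !ubrE um_cls !um_uU. Qed.

Lemma um_al X : h (ual D1 X) = ual D2 (h X).
Proof.
move: X; apply: uce_ext.
- exact (is_lin_comp um_lin (@ual_lin _ _ _ _ D1)).
- exact (is_lin_comp (@ual_lin _ _ _ _ D2) um_lin).
- by move=> a b; rewrite ual_cls !um_cls ual_cls !(hom_al Hg).
Qed.
End UceFunctor.

Section HomActions.
Variables (K : fieldType) (L M : lmodType K).
Variables (brL : L -> L -> L) (alL : L -> L) (brM : M -> M -> M) (alM : M -> M).
Variables (la : L -> M -> M) (ra : M -> L -> M).
Hypothesis HA : hom_action brL alL brM alM la ra.

Lemma ha_la : bilin la.
Proof.
case: HA => _ H2 H3 _; split=> [m|x] c u v.
- exact: (H2 c u v m I I I).1.
- exact: (H3 c x u v I I I).1.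
Qed.

Lemma ha_ra : bilin ra.
Proof.
case: HA => _ H2 H3 _; split=> [x|m] c u v.
- exact: (H3 c x u v I I I).2.
- exact: (H2 c u v m I I I).2.
Qed.

Lemma ha_ax x y m m' :
       ra (alM m) (brL x y) = ra (ra m x) (alL y) - ra (ra m y) (alL x)
    /\ la (alL x) (ra m y) = ra (la x m) (alL y) - la (brL x y) (alM m)
    /\ la (alL x) (la y m) = la (brL x y) (alM m) - ra (la x m) (alL y)
    /\ la (alL x) (brM m m') = brM (la x m) (alM m') - brM (la x m') (alM m)
    /\ brM (alM m) (ra m' x) = ra (brM m m') (alL x) - brM (ra m x) (alM m')
    /\ brM (alM m) (la x m') = brM (ra m x) (alM m') - ra (brM m m') (alL x)
    /\ alM (la x m) = la (alL x) (alM m)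
    /\ alM (ra m x) = ra (alM m) (alL x).
Proof. by case: HA => _ _ _; apply. Qed.

Hypotheses (HL : hom_leibniz brL alL) (HM : hom_leibniz brM alM).

Lemma sd_br_fst_bilin : bilin (fun x y => (sd_br brM brL alL la ra x y).1).
Proof.
have bM := hl_bilin HM; have bla := ha_la; have bra := ha_ra; have lL := hl_lin HL.
split=> [[m2 l2]|[m1 l1]] c [m l] [m' l']; rewrite /sd_br /=.
- rewrite (bilDl bM) (bilZl bM) (linD lL) (linZ lL) (bilDl bla) (bilZl bla).
  by rewrite (bilDl bra) (bilZl bra) !scalerDr; abel.
- rewrite (bilDr bM) (bilZr bM) (linD lL) (linZ lL) (bilDr bla) (bilZr bla).
  by rewrite (bilDr bra) (bilZr bra) !scalerDr; abel.
Qed.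
Local Notation br := (sd_br brM brL alL la ra).
Local Notation al := (sd_al alM alL).

Lemma sd_leib_fst x y z :
  (br (al x) (br y z)).1 = (br (br x y) (al z)).1 - (br (br x z) (al y)).1.
Proof.
case: x => m1 l1; case: y => m2 l2; case: z => m3 l3; rewrite /sd_br /sd_al /=.
have bM := hl_bilin HM; have bla := ha_la; have bra := ha_ra.
rewrite !(bilDr bM) !(bilDr bla) !(bilDl bM) !(bilDl bra) !(hl_mult HL).
have [a1 _] := ha_ax (alL l2) (alL l3) m1 m1.
have [_ [a2 _]] := ha_ax (alL l1) (alL l3) m2 m2.
have [_ [_ [a3 _]]] := ha_ax (alL l1) (alL l2) m3 m3.
have [_ [_ [_ [a4 _]]]] := ha_ax (alL l1) l1 m2 m3.
have [_ [_ [_ [_ [a5 _]]]]] := ha_ax (alL l3) l1 m1 m2.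
have [_ [_ [_ [_ [_ [a6 _]]]]]] := ha_ax (alL l2) l1 m1 m3.
by rewrite a1 a2 a3 a4 a5 a6 (hl_leib HM); abel.
Qed.
End HomActions.

Lemma bracket_action_on (K : fieldType) (L : lmodType K) (br : L -> L -> L)
  (al : L -> L) (PL PM : L -> Prop) :
  hom_leibniz br al ->
  (forall x m, PL x -> PM m -> PM (br x m) /\ PM (br m x)) ->
  hom_action_on PL PM br al br al br br.
Proof.
move=> HL Hclosed; have bL := hl_bilin HL; split=> //.
- by move=> c x y m _ _ _; split; [exact: (bL.1 m)|exact: (bL.2 m)].
- by move=> c x m m' _ _ _; split; [exact: (bL.2 x)|exact: (bL.1 x)].
move=> x y m m' _ _ _ _; rewrite !(hl_leib HL) !(hl_mult HL).
by do 6 (split; first by []).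
Qed.

Section DescendBilinear.
Variables (K : fieldType) (S L W : lmodType K) (phi : S -> L) (b : S -> S -> W).
Hypotheses (phi_lin : is_lin phi) (phi_onto : forall x, exists r, phi r = x).
Hypotheses (b_bilin : bilin b) (b_ker : forall k y, phi k = 0 -> b k y = 0 /\ b y k = 0).

Lemma bil_phi_eq r1 r1' r2 r2' : phi r1 = phi r1' -> phi r2 = phi r2' ->
  b r1 r2 = b r1' r2'.
Proof.
move=> E1 E2.
have [k1 k2] : phi (r1 - r1') = 0 /\ phi (r2 - r2') = 0.
  by rewrite !(linB phi_lin) E1 E2 !subrr.
rewrite -[r1](subrK r1') (bilDl b_bilin) (b_ker _ k1).1 add0r.
by rewrite -[r2](subrK r2') (bilDr b_bilin) (b_ker _ k2).2 add0r.
Qed.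

Definition phi_lift (x : L) : S := proj1_sig (constructive_indefinite_description _ (phi_onto x)).

Lemma phi_liftK x : phi (phi_lift x) = x.
Proof. exact: (proj2_sig (constructive_indefinite_description _ (phi_onto x))). Qed.

Definition descended (x y : L) : W := b (phi_lift x) (phi_lift y).

Lemma descendedE r1 r2 : descended (phi r1) (phi r2) = b r1 r2.
Proof. by apply: bil_phi_eq; rewrite phi_liftK. Qed.

Lemma descended_bilin : bilin descended.
Proof.
split=> [y|x] c u v; rewrite -[u]phi_liftK -[v]phi_liftK.
- by rewrite -[y]phi_liftK -phi_lin !descendedE (bilDl b_bilin) (bilZl b_bilin).
- by rewrite -[x]phi_liftK -phi_lin !descendedE (bilDr b_bilin) (bilZr b_bilin).
Qed.

Variables (brS : S -> S -> S) (alS : S -> S) (brL : L -> L -> L) (alL : L -> L).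
Hypotheses (phi_hom : hl_hom brS alS brL alL phi)
  (b_leib : forall x y z,
     b (alS x) (brS y z) = b (brS x y) (alS z) - b (brS x z) (alS y)).

Lemma descended_kills : kills_IL brL alL descended.
Proof.
move=> g1 g2 g3; rewrite -[g1]phi_liftK -[g2]phi_liftK -[g3]phi_liftK.
by rewrite -!(hom_br phi_hom) -!(hom_al phi_hom) !descendedE b_leib; abel.
Qed.

Lemma descend_to_uce (D : uce_data brL alL) :
  exists h : uce_T D -> W, is_lin h /\ forall r1 r2, h (ucls D (phi r1) (phi r2)) = b r1 r2.
Proof.
exists (uce_induced (D:=D) descended_bilin descended_kills); split=> [|r1 r2].
- exact: uce_induced_lin.
- by rewrite uce_induced_cls descendedE.
Qed.
End DescendBilinear.

Section SplitExtension.
Variables (K : fieldType) (M G Q : lmodType K).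
Variables (brM : M -> M -> M) (alM : M -> M) (brG : G -> G -> G) (alG : G -> G)
  (brQ : Q -> Q -> Q) (t : M -> G) (p : G -> Q) (s : Q -> G).
Hypotheses (HM : hom_leibniz brM alM) (HG : hom_leibniz brG alG)
  (HQ : hom_leibniz brQ (fun q => q))
  (PM : alpha_perfect brM alM) (PG : alpha_perfect brG alG)
  (Ht : hl_hom brM alM brG alG t) (Hp : hl_hom brG alG brQ (fun q => q) p)
  (Hs : hl_hom brQ (fun q => q) brG alG s)
  (t_inj : injective t) (exactness : forall g, p g = 0 <-> exists m, t m = g)
  (ps : forall q, p (s q) = q).
Variables (actQM : Q -> M -> M) (actMQ : M -> Q -> M).
Hypotheses (HactQM : forall q m, t (actQM q m) = brG (s q) (t m))
  (HactMQ : forall m q, t (actMQ m q) = brG (t m) (s q))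
  (symm : forall q m, actQM q m + actMQ m q = 0).

Let bM := hl_bilin HM.
Let bG := hl_bilin HG.
Let lM := hl_lin HM.
Let tl := hom_lin Ht.
Let sl := hom_lin Hs.
Let pl := hom_lin Hp.

(* Since the image of s is fixed by alpha_G,
   the Leibniz identity of G makes q . - a derivation of M, compatible with
   alpha_M, whose values anticommute with alpha_M-images; symmetry lets us
   express the right action through the left one. *)
Lemma s_fixed q : s q = alG (s q). Proof. exact: (hom_al Hs). Qed.
Lemma t_br x y : t (brM x y) = brG (t x) (t y). Proof. exact: (hom_br Ht). Qed.
Lemma t_al x : t (alM x) = alG (t x). Proof. exact: (hom_al Ht). Qed.
Lemma s_br x y : s (brQ x y) = brG (s x) (s y). Proof. exact: (hom_br Hs). Qed.
Lemma p_t m : p (t m) = 0. Proof. by apply/exactness; exists m. Qed.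

Lemma actMQ_opp m q : actMQ m q = - actQM q m.
Proof. by apply/eqP; rewrite -addr_eq0 addrC symm. Qed.

Lemma brG_anti m q : brG (t m) (s q) = - brG (s q) (t m).
Proof. by rewrite -HactMQ -HactQM actMQ_opp (linN tl). Qed.

Lemma actQM_bilin : bilin actQM.
Proof.
split=> [m|q] c x y; apply: t_inj; rewrite tl !HactQM.
- by rewrite sl (bilDl bG) (bilZl bG).
- by rewrite tl (bilDr bG) (bilZr bG).
Qed.

Lemma actQM_al q a : alM (actQM q a) = actQM q (alM a).
Proof. by apply: t_inj; rewrite t_al !HactQM (hl_mult HG) -s_fixed t_al. Qed.

Lemma actQM_comm q r a :
  actQM q (actQM r a) = actQM (brQ q r) (alM a) + actQM r (actQM q a).
Proof.
apply: t_inj; rewrite (linD tl) !HactQM.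
rewrite [in LHS](s_fixed q) (hl_leib HG) -?s_fixed s_br t_al -(HactQM q a) brG_anti.
abel.
Qed.

Lemma actQM_der q a b :
  actQM q (brM a b) = brM (actQM q a) (alM b) - brM (actQM q b) (alM a).
Proof.
apply: t_inj; rewrite (linB tl) !t_br !HactQM !t_br !t_al.
by rewrite [in LHS](s_fixed q) (hl_leib HG) -?s_fixed.
Qed.

Lemma actQM_anti q a b : brM (alM a) (actQM q b) = - brM (actQM q b) (alM a).
Proof.
apply: t_inj; rewrite (linN tl) !t_br !HactQM !t_al.
rewrite (hl_leib HG) -?s_fixed -t_br !brG_anti -!HactQM actQM_der (linB tl) !t_br !t_al.
by rewrite (bilNl bG); abel.
Qed.

Variables (DM : uce_data brM alM) (DG : uce_data brG alG) (DQ : uce_data brQ (fun q => q)).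
Local Notation clM := (ucls DM).
Local Notation clG := (ucls DG).
Let cMb := ucls_bilin DM.
Let cGb := ucls_bilin DG.

Ltac expand := repeat progress rewrite
  ?(bilDl cMb) ?(bilDr cMb) ?(bilNl cMb) ?(bilNr cMb) ?(bilZl cMb) ?(bilZr cMb)
  ?(bilDl actQM_bilin) ?(bilDr actQM_bilin) ?(bilNl actQM_bilin) ?(bilNr actQM_bilin)
  ?(bilZl actQM_bilin) ?(bilZr actQM_bilin)
  ?(bilDl bM) ?(bilDr bM) ?(bilNl bM) ?(bilNr bM) ?(bilZl bM) ?(bilZr bM)
  ?(linD lM) ?(linN lM) ?(linZ lM).
Ltac abel_scaled := rewrite ?scalerBr ?scalerDr ?scalerN; abel.

Definition fL q a b := clM (actQM q a) (alM b) - clM (actQM q b) (alM a).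
Definition fR q a b := clM (actMQ a q) (alM b) - clM (alM a) (actQM q b).

Lemma fL_bilin q : bilin (fL q).
Proof. by rewrite /fL; split=> [y|x] c u v; expand; abel_scaled. Qed.

Lemma fR_bilin q : bilin (fR q).
Proof. by rewrite /fR; split=> [y|x] c u v; rewrite ?actMQ_opp; expand; abel_scaled. Qed.

Lemma fL_kills q : kills_IL brM alM (fL q).
Proof.
move=> x1 x2 x3; rewrite /fL !actQM_der !(hl_mult HM); expand; rewrite -!actQM_al.
rewrite (cls_rel DM (actQM q x1) (alM x2) (alM x3)).
rewrite (cls_rel DM (actQM q x2) (alM x1) (alM x3)).
rewrite (cls_rel DM (actQM q x3) (alM x1) (alM x2)).
abel.
Qed.

Lemma fR_kills q : kills_IL brM alM (fR q).
Proof.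
move=> x1 x2 x3; rewrite /fR !actMQ_opp !actQM_der !(hl_mult HM); expand; rewrite -!actQM_al.
rewrite (cls_rel DM (actQM q x1) (alM x2) (alM x3)).
rewrite (cls_rel DM (alM x1) (actQM q x2) (alM x3)).
rewrite (cls_rel DM (alM x1) (actQM q x3) (alM x2)).
by rewrite !actQM_anti; expand; abel.
Qed.

Definition hL q : uce_T DM -> uce_T DM := uce_induced (fL_bilin q) (fL_kills q).
Definition hR q : uce_T DM -> uce_T DM := uce_induced (fR_bilin q) (fR_kills q).

Lemma hL_lin q : is_lin (hL q). Proof. exact: uce_induced_lin. Qed.
Lemma hR_lin q : is_lin (hR q). Proof. exact: uce_induced_lin. Qed.
Lemma hL_cls q a b : hL q (clM a b) = fL q a b. Proof. exact: uce_induced_cls. Qed.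
Lemma hR_cls q a b : hR q (clM a b) = fR q a b. Proof. exact: uce_induced_cls. Qed.

Variables (tau : uce_T DM -> uce_T DG) (sigma : uce_T DQ -> uce_T DG)
  (pi : uce_T DG -> uce_T DQ).
Hypotheses (Htau : uce_map DM DG t tau) (Hsigma : uce_map DQ DG s sigma)
  (Hpi : uce_map DG DQ p pi).
Let uUM : is_lin (uU DM) := @uU_lin _ _ _ _ DM.
Let ualM : is_lin (ual DM) := @ual_lin _ _ _ _ DM.
Let uUG : is_lin (uU DG) := @uU_lin _ _ _ _ DG.
Let uUQ : is_lin (uU DQ) := @uU_lin _ _ _ _ DQ.
Let ualG : is_lin (ual DG) := @ual_lin _ _ _ _ DG.
Let taul : is_lin tau := um_lin Htau.

Ltac lin_atom := first [exact: hL_lin | exact: hR_lin | exact: ualM | exact: uUM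
  | exact: taul | exact: tl | exact: is_lin_id].
Ltac solve_lin := first [ lin_atom | (apply: is_lin_sub; solve_lin)
  | (apply: is_lin_add; solve_lin) | (apply: is_lin_comp; [lin_atom|solve_lin]) ].

Lemma hL_linq X c q q' : hL (c *: q + q') X = c *: hL q X + hL q' X.
Proof.
move: X; apply: uce_ext; first exact: hL_lin.
- apply: is_lin_add; last exact: hL_lin.
  by move=> d x y; rewrite (hL_lin q) scalerDr !scalerA mulrC.
- by move=> a b; rewrite !hL_cls /fL; expand; abel_scaled.
Qed.

Lemma hR_linq X c q q' : hR (c *: q + q') X = c *: hR q X + hR q' X.
Proof.
move: X; apply: uce_ext; first exact: hR_lin.
- apply: is_lin_add; last exact: hR_lin.
  by move=> d x y; rewrite (hR_lin q) scalerDr !scalerA mulrC.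
- by move=> a b; rewrite !hR_cls /fR !actMQ_opp; expand; abel_scaled.
Qed.

Lemma uU_hL q X : uU DM (hL q X) = actQM q (uU DM X).
Proof.
move: X; apply: uce_ext; [solve_lin| |].
- exact (is_lin_comp (actQM_bilin.2 q) uUM).
- by move=> a b; rewrite hL_cls /fL (linB uUM) !uU_cls actQM_der.
Qed.

Lemma uU_hR q X : uU DM (hR q X) = actMQ (uU DM X) q.
Proof.
move: X; apply: uce_ext; [solve_lin| |].
- by move=> c x y; rewrite !actMQ_opp uUM (bilDr actQM_bilin) (bilZr actQM_bilin) scalerN opprD.
- move=> a b; rewrite hR_cls /fR (linB uUM) !uU_cls !actMQ_opp actQM_anti actQM_der.
  by expand; abel.
Qed.

Lemma al_hL q X : ual DM (hL q X) = hL q (ual DM X).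
Proof.
move: X; apply: uce_ext; [solve_lin|solve_lin|].
by move=> a b; rewrite hL_cls ual_cls hL_cls /fL (linB ualM) !ual_cls !actQM_al.
Qed.

Lemma al_hR q X : ual DM (hR q X) = hR q (ual DM X).
Proof.
move: X; apply: uce_ext; [solve_lin|solve_lin|].
move=> a b; rewrite hR_cls ual_cls hR_cls /fR (linB ualM) !ual_cls !actMQ_opp.
by rewrite (linN lM) !actQM_al.
Qed.

Lemma tau_hL q X : tau (hL q X) = clG (s q) (t (uU DM X)).
Proof.
move: X; apply: uce_ext; [solve_lin| |].
- exact (is_lin_comp (cGb.2 _) (is_lin_comp tl uUM)).
- move=> a b; rewrite hL_cls /fL (linB taul) !(um_cls Htau) !HactQM !t_al uU_cls t_br.
  by rewrite [in RHS](s_fixed q) (cls_rel DG (s q) (t a) (t b)) -?s_fixed.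
Qed.

Lemma tau_hR q X : tau (hR q X) = clG (t (uU DM X)) (s q).
Proof.
move: X; apply: uce_ext; [solve_lin| |].
- exact (is_lin_comp (cGb.1 (s q)) (is_lin_comp tl uUM)).
- move=> a b; rewrite hR_cls /fR (linB taul) !(um_cls Htau) HactMQ HactQM !t_al uU_cls t_br.
  rewrite -[brG (s q) (t b)]opprK -brG_anti (bilNr cGb) (cls_rel DG (t a) (t b) (s q)).
  by rewrite [in RHS](s_fixed q); abel.
Qed.

Lemma hR_br q r X : hR (brQ q r) (ual DM X) = hR r (hR q X) - hR q (hR r X).
Proof.
move: X; apply: uce_ext; [solve_lin|solve_lin|].
move=> a b; rewrite ual_cls !hR_cls /fR !(linB (hR_lin _)) !hR_cls /fR !actMQ_opp; expand.
by rewrite (actQM_comm q r a) (actQM_comm q r b) -!actQM_al; expand; abel_scaled.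
Qed.

Lemma hL_hR q r X : hL q (hR r X) = hR r (hL q X) - hL (brQ q r) (ual DM X).
Proof.
move: X; apply: uce_ext; [solve_lin|solve_lin|].
move=> a b; rewrite ual_cls hR_cls hL_cls /fR /fL (linB (hR_lin _)) (linB (hL_lin _)).
rewrite !hR_cls !hL_cls /fR /fL !actMQ_opp; expand.
by rewrite (actQM_comm q r a) (actQM_comm q r b) -!actQM_al; expand; abel_scaled.
Qed.

Lemma hL_hL q r X : hL q (hL r X) = hL (brQ q r) (ual DM X) - hR r (hL q X).
Proof.
move: X; apply: uce_ext; [solve_lin|solve_lin|].
move=> a b; rewrite ual_cls !hL_cls /fL (linB (hR_lin _)) !(linB (hL_lin _)).
rewrite !hR_cls !hL_cls /fR /fL !actMQ_opp; expand.
by rewrite (actQM_comm q r a) (actQM_comm q r b) -!actQM_al; expand; abel_scaled.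
Qed.

Definition laU (z : uce_T DQ) (X : uce_T DM) : uce_T DM := hL (uU DQ z) X.
Definition raU (X : uce_T DM) (z : uce_T DQ) : uce_T DM := hR (uU DQ z) X.

Lemma laU_cls q1 q2 m1 m2 :
  laU (ucls DQ q1 q2) (clM (alM m1) (alM m2))
    = clM (actQM (brQ q1 q2) (alM m1)) (alM (alM m2))
      - clM (actQM (brQ q1 q2) (alM m2)) (alM (alM m1)).
Proof. by rewrite /laU uU_cls hL_cls. Qed.

Lemma raU_cls q1 q2 m1 m2 :
  raU (clM (alM m1) (alM m2)) (ucls DQ q1 q2)
    = clM (actMQ (alM m1) (brQ q1 q2)) (alM (alM m2))
      - clM (alM (alM m1)) (actQM (brQ q1 q2) (alM m2)).
Proof. by rewrite /raU uU_cls hR_cls. Qed.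

Lemma uce_action : hom_action (ubr DQ) (fun z => z) (ubr DM) (ual DM) laU raU.
Proof.
rewrite /laU /raU; split=> //.
- by move=> c x y m _ _ _; rewrite uUQ hL_linq hR_linq.
- by move=> c x m m' _ _ _; rewrite (hL_lin _) (hR_lin _).
move=> x y m m' _ _ _ _; rewrite !uU_br.
do 3 (split; first by rewrite ?hR_br ?hL_hR ?hL_hL).
split; first by rewrite !ubrE !uU_hL !(uU_al HM) hL_cls.
split; first by rewrite !ubrE !uU_hR !(uU_al HM) hR_cls /fR !actMQ_opp; expand; abel.
split; first by rewrite !ubrE !uU_hL !uU_hR !(uU_al HM) hR_cls /fR; abel.
by split; [exact: al_hL|exact: al_hR].
Qed.

Lemma laU_ker z X : uU DQ z = 0 -> laU z X = 0.
Proof. by rewrite /laU => ->; exact: (lin0 (hL_linq X : is_lin (fun q => hL q X))). Qed.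

Lemma raU_ker z X : uU DQ z = 0 -> raU X z = 0.
Proof. by rewrite /raU => ->; exact: (lin0 (hR_linq X : is_lin (fun q => hR q X))). Qed.

Let sigl : is_lin sigma := um_lin Hsigma.
Let pil : is_lin pi := um_lin Hpi.

Lemma pi_tau y : pi (tau y) = 0.
Proof.
move: y; apply: uce_ext; [exact: (is_lin_comp pil taul)|exact: is_lin_zero|].
by move=> a b; rewrite (um_cls Htau) (um_cls Hpi) !p_t (bil0l (ucls_bilin DQ)).
Qed.

Lemma pi_sigma z : pi (sigma z) = z.
Proof.
move: z; apply: uce_ext; [exact: (is_lin_comp pil sigl)|exact: is_lin_id|].
by move=> a b; rewrite (um_cls Hsigma) (um_cls Hpi) !ps.
Qed.

Lemma sigma_al z : ual DG (sigma z) = sigma z.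
Proof.
move: z; apply: uce_ext; [exact: (is_lin_comp ualG sigl)|exact: sigl|].
by move=> a b; rewrite (um_cls Hsigma) ual_cls -!s_fixed.
Qed.

Lemma tau_sigma_br y z : ubr DG (tau y) (sigma z) = tau (raU y z).
Proof. by rewrite ubrE (um_uU Ht Htau) (um_uU Hs Hsigma) /raU tau_hR. Qed.

Lemma sigma_tau_br z y : ubr DG (sigma z) (tau y) = tau (laU z y).
Proof. by rewrite ubrE (um_uU Ht Htau) (um_uU Hs Hsigma) /laU tau_hL. Qed.

Lemma G_split g : exists m, g = t m + s (p g).
Proof.
have [m Hm] : exists m, t m = g - s (p g) by apply/exactness; rewrite (linB pl) ps subrr.
by exists m; rewrite Hm subrK.
Qed.

Lemma cls_split g1 g2 : exists y z, clG g1 g2 = tau y + sigma z.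
Proof.
have [m1 ->] := G_split g1; have [m2 ->] := G_split g2.
have [X1 HX1] := perfect_surj DM PM m1; have [X2 HX2] := perfect_surj DM PM m2.
exists (clM m1 m2 + hR (p g2) X1 + hL (p g1) X2), (ucls DQ (p g1) (p g2)).
rewrite !(linD taul) tau_hR tau_hL HX1 HX2 (um_cls Htau) (um_cls Hsigma).
by rewrite (bilDl cGb) !(bilDr cGb); abel.
Qed.

Lemma uce_split x : exists y z, x = tau y + sigma z.
Proof.
elim: (ucls_span x) => [|c u v [g1 [g2 ->]] _ [y [z ->]]].
- by exists 0, 0; rewrite (lin0 taul) (lin0 sigl) addr0.
- have [y' [z' ->]] := cls_split g1 g2.
  by exists (c *: y' + y), (c *: z' + z); rewrite taul sigl scalerDr; abel.
Qed.

Lemma uce_split_unique y z y' z' :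
  tau y + sigma z = tau y' + sigma z' -> tau y = tau y' /\ z = z'.
Proof.
move=> E; have Ez : z = z' by have := congr1 pi E; rewrite !(linD pil) !pi_tau !pi_sigma !add0r.
by split=> //; apply: (addIr (sigma z)); rewrite {2}Ez.
Qed.

Lemma tau_sigma_direct y z : tau y = sigma z -> tau y = 0.
Proof.
move=> E; have [Ey _] : tau y = tau 0 /\ 0 = z.
  by apply: uce_split_unique; rewrite E (lin0 taul) (lin0 sigl) add0r addr0.
by rewrite Ey (lin0 taul).
Qed.

Definition sd_brU := sd_br (ubr DM) (ubr DQ) (fun z => z) laU raU.
Definition sd_alU := sd_al (ual DM) (fun z : uce_T DQ => z).
Definition tau_sigma (r : uce_T DM * uce_T DQ) : uce_T DG := tau r.1 + sigma r.2.

Lemma tau_sigma_hom : hl_hom sd_brU sd_alU (ubr DG) (ual DG) tau_sigma.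
Proof.
have bGU := ubr_bilin DG; split.
- by move=> c [x z] [x' z']; rewrite /tau_sigma /= taul sigl scalerDr; abel.
- case=> x1 z1 [x2 z2]; rewrite /tau_sigma /sd_brU /sd_br /=.
  rewrite !(linD taul) (um_br Ht Htau) -tau_sigma_br -sigma_tau_br (um_br Hs Hsigma).
  by rewrite (bilDl bGU) !(bilDr bGU); abel.
- by case=> x z; rewrite /tau_sigma /sd_alU /sd_al /= (um_al Ht Htau) (linD ualG) sigma_al.
Qed.

Lemma tau_sigma_onto x : exists r, tau_sigma r = x.
Proof. by have [y [z ->]] := uce_split x; exists (y, z). Qed.

Lemma uU_tau_sigma r : uU DG (tau_sigma r) = t (uU DM r.1) + s (uU DQ r.2).
Proof. by rewrite /tau_sigma (linD uUG) (um_uU Ht Htau) (um_uU Hs Hsigma). Qed.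

Lemma uU_tau_sigma_ker r : uU DG (tau_sigma r) = 0 <-> uU DM r.1 = 0 /\ uU DQ r.2 = 0.
Proof.
rewrite uU_tau_sigma; split=> [E|[-> ->]]; last by rewrite (lin0 tl) (lin0 sl) addr0.
have Eq : uU DQ r.2 = 0 by have := congr1 p E; rewrite (linD pl) p_t ps add0r (lin0 pl).
split=> //; apply: t_inj; rewrite (lin0 tl).
by move: E; rewrite Eq (lin0 sl) addr0.
Qed.

Lemma uU_tau_sigma_hom :
  hl_hom sd_brU sd_alU brG alG (fun r => uU DG (tau_sigma r)).
Proof. exact (hl_hom_comp tau_sigma_hom (uU_hom HG DG)). Qed.

Lemma uU_tau_sigma_onto g : exists r, uU DG (tau_sigma r) = g.
Proof.
have [X <-] := perfect_surj DG PG g; have [r <-] := tau_sigma_onto X.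
by exists r.
Qed.

(* The kernel of tau x| sigma is spanned by the actions of uce(Q) on Ker U_M.
   One inclusion is direct; for the other, the first component of the
   bracket of the semi-direct product, taken modulo that span, descends
   along the onto homomorphism U o (tau x| sigma) and then factors through
   uce(G) as a map h with h o tau = the quotient map. *)
Definition ker_gens (v : uce_T DM) : Prop :=
  exists z k, uU DM k = 0 /\ (v = laU z k \/ v = raU k z).

Lemma span_ker_gens_tau X : in_span ker_gens X -> tau X = 0.
Proof.
move=> HX; apply: (lin_span taul (@is_lin_zero _ (uce_T DM) (uce_T DG)) _ HX).
move=> _ [z [k [Hk [->|->]]]].
- by rewrite /laU tau_hL Hk (lin0 tl) (bil0r cGb).
- by rewrite /raU tau_hR Hk (lin0 tl) (bil0l cGb).
Qed.

Let uceQ_hl : hom_leibniz (ubr DQ) (fun z => z) := uce_hl_id HQ DQ (fun _ => erefl).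
Let uceM_hl : hom_leibniz (ubr DM) (ual DM) := uce_hl HM DM.

Lemma tau_ker_span X : tau X = 0 -> in_span ker_gens X.
Proof.
move=> HX; have [W [proj [proj_lin proj_ker]]] := quotient_by_span ker_gens.
pose b r1 r2 := proj (sd_brU r1 r2).1.
have b_bilin : bilin b.
  exact (bilin_comp proj_lin (sd_br_fst_bilin uce_action uceQ_hl uceM_hl)).
have b_ker k y : uU DG (tau_sigma k) = 0 -> b k y = 0 /\ b y k = 0.
  case: k y => [k1 k2] [y1 y2] /uU_tau_sigma_ker /= [H1 H2].
  rewrite /b /sd_brU /sd_br /= !ubrE H1 (bil0l cMb) (bil0r cMb).
  rewrite (laU_ker y1 H2) (raU_ker y1 H2) !add0r !addr0.
  by split; apply/proj_ker/span_gen; exists y2, k1; split; auto.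
have b_leib x y z :
    b (sd_alU x) (sd_brU y z) = b (sd_brU x y) (sd_alU z) - b (sd_brU x z) (sd_alU y).
  rewrite /b -(linB proj_lin); congr proj.
  exact: sd_leib_fst uce_action uceQ_hl uceM_hl x y z.
have [h [h_lin h_cls]] := descend_to_uce (hom_lin uU_tau_sigma_hom) uU_tau_sigma_onto
  b_bilin b_ker uU_tau_sigma_hom b_leib DG.
have h_tau Y : h (tau Y) = proj Y.
  move: Y; apply: uce_ext; [exact: (is_lin_comp h_lin taul)|exact: proj_lin|].
  move=> a c; have [Xa HXa] := perfect_surj DM PM a; have [Xc HXc] := perfect_surj DM PM c.
  have lift Z : t (uU DM Z) = uU DG (tau_sigma (Z, 0)).
    by rewrite uU_tau_sigma /= (lin0 uUQ) (lin0 sl) addr0.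
  rewrite (um_cls Htau) -HXa -HXc !lift h_cls /b /sd_brU /sd_br /= ubrE.
  by rewrite (laU_ker _ (lin0 uUQ)) (raU_ker _ (lin0 uUQ)) !addr0.
by apply/proj_ker; rewrite -h_tau HX (lin0 h_lin).
Qed.

Let ubrG_bilin : bilin (ubr DG) := ubr_bilin DG.

Definition in_tau (x : uce_T DG) : Prop := exists y, tau y = x.
Definition in_sigma (x : uce_T DG) : Prop := exists z, sigma z = x.

Lemma in_tau_add a c : in_tau a -> in_tau c -> in_tau (a + c).
Proof. by move=> [y <-] [y' <-]; exists (y + y'); rewrite (linD taul). Qed.

Lemma in_tau_ker_pi x : in_tau x <-> pi x = 0.
Proof.
split=> [[y <-]|E]; first exact: pi_tau.
have [y [z Exyz]] := uce_split x; exists y.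
have Ez : z = 0 by have := congr1 pi Exyz; rewrite E (linD pil) pi_tau pi_sigma add0r.
by rewrite Exyz Ez (lin0 sigl) addr0.
Qed.

Lemma tau_ideal y x :
  in_tau (ubr DG (tau y) x) /\ in_tau (ubr DG x (tau y)) /\ in_tau (ual DG (tau y)).
Proof.
have [y' [z ->]] := uce_split x; split; last split.
- by rewrite (bilDr ubrG_bilin) -(um_br Ht Htau) tau_sigma_br; apply: in_tau_add; eexists.
- by rewrite (bilDl ubrG_bilin) -(um_br Ht Htau) sigma_tau_br; apply: in_tau_add; eexists.
- by exists (ual DM y); rewrite (um_al Ht Htau).
Qed.

Lemma sigma_subalgebra z1 z2 : in_sigma (ubr DG (sigma z1) (sigma z2)).
Proof. by exists (ubr DQ z1 z2); rewrite (um_br Hs Hsigma). Qed.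

Lemma internal_semidirect :
  hom_action_on in_sigma in_tau (ubr DG) (ual DG) (ubr DG) (ual DG) (ubr DG) (ubr DG)
  /\ (forall m1 l1 m2 l2, in_tau m1 -> in_sigma l1 -> in_tau m2 -> in_sigma l2 ->
       let r := sd_br (ubr DG) (ubr DG) (ual DG) (ubr DG) (ubr DG) (m1, l1) (m2, l2) in
       in_tau r.1 /\ in_sigma r.2 /\ r.1 + r.2 = ubr DG (m1 + l1) (m2 + l2))
  /\ (forall m l, in_tau m -> in_sigma l ->
       let r := sd_al (ual DG) (ual DG) (m, l) in
       in_tau r.1 /\ in_sigma r.2 /\ r.1 + r.2 = ual DG (m + l))
  /\ (forall x, exists m l, [/\ in_tau m, in_sigma l & x = m + l])
  /\ (forall m l m' l', in_tau m -> in_sigma l -> in_tau m' -> in_sigma l' ->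
       m + l = m' + l' -> m = m' /\ l = l').
Proof.
split; last split; last split; last split.
- apply: bracket_action_on (uce_hl HG DG) _ => _ _ [z <-] [y <-].
  by have [? [? _]] := tau_ideal y (sigma z).
- move=> m1 l1 m2 l2 [y1 <-] [z1 <-] [y2 <-] [z2 <-]; rewrite /sd_br /= !sigma_al.
  split; last split; last by rewrite (bilDl ubrG_bilin) !(bilDr ubrG_bilin); abel.
  + rewrite -(um_br Ht Htau) sigma_tau_br tau_sigma_br -!(linD taul); eexists; reflexivity.
  + exact: sigma_subalgebra.
- move=> m l [y <-] [z <-]; rewrite /sd_al /= sigma_al (linD ualG) sigma_al.
  by split; [exists (ual DM y); rewrite (um_al Ht Htau)|split; [exists z|]].
- by move=> x; have [y [z ->]] := uce_split x; exists (tau y), (sigma z); split; eexists.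
- move=> m l m' l' [y <-] [z <-] [y' <-] [z' <-] /uce_split_unique [-> ->].
  by split.
Qed.

Lemma sigma_embedding :
  injective sigma
  /\ (forall z1 z2, sigma (ubr DQ z1 z2) = ubr DG (sigma z1) (sigma z2))
  /\ (forall z, sigma z = ual DG (sigma z)).
Proof.
split=> [z z' E|]; first by have := congr1 pi E; rewrite !pi_sigma.
by split=> [z1 z2|z]; [exact: (um_br Hs Hsigma)|rewrite sigma_al].
Qed.

Lemma kerU_split :
  (forall x, uU DG x = 0 <->
     exists y z, [/\ uU DM y = 0, uU DQ z = 0 & x = tau y + sigma z])
  /\ (forall y z, uU DM y = 0 -> uU DQ z = 0 -> tau y = sigma z -> tau y = 0).
Proof.
split=> [x|y z _ _]; last exact: tau_sigma_direct.
split=> [Ex|[y [z [Hy Hz ->]]]]; last exact/(uU_tau_sigma_ker (y, z)).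
have [y [z Exyz]] := uce_split x; exists y, z.
have [Hy Hz] : uU DM y = 0 /\ uU DQ z = 0.
  by apply/(uU_tau_sigma_ker (y, z)); rewrite /tau_sigma /= -Exyz.
by split.
Qed.

Lemma semidirect_presentation :
  exists (laU : uce_T DQ -> uce_T DM -> uce_T DM)
         (raU : uce_T DM -> uce_T DQ -> uce_T DM),
  [/\ forall q1 q2 m1 m2,
        laU (ucls DQ q1 q2) (ucls DM (alM m1) (alM m2))
          = ucls DM (actQM (brQ q1 q2) (alM m1)) (alM (alM m2))
            - ucls DM (actQM (brQ q1 q2) (alM m2)) (alM (alM m1))
        /\ raU (ucls DM (alM m1) (alM m2)) (ucls DQ q1 q2)
          = ucls DM (actMQ (alM m1) (brQ q1 q2)) (alM (alM m2))
            - ucls DM (alM (alM m1)) (actQM (brQ q1 q2) (alM m2)),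
      hom_action (ubr DQ) (fun z => z) (ubr DM) (ual DM) laU raU,
      hl_hom (sd_br (ubr DM) (ubr DQ) (fun z => z) laU raU)
          (sd_al (ual DM) (fun z => z)) (ubr DG) (ual DG)
          (fun r : uce_T DM * uce_T DQ => tau r.1 + sigma r.2)
        /\ (forall x, exists r : uce_T DM * uce_T DQ, tau r.1 + sigma r.2 = x),
      [/\ hl_hom (sd_br (ubr DM) (ubr DQ) (fun z => z) laU raU)
              (sd_al (ual DM) (fun z => z)) brG alG
              (fun r : uce_T DM * uce_T DQ => uU DG (tau r.1 + sigma r.2)),
          (forall g, exists r : uce_T DM * uce_T DQ, uU DG (tau r.1 + sigma r.2) = g),
          (forall r : uce_T DM * uce_T DQ,
             uU DG (tau r.1 + sigma r.2) = t (uU DM r.1) + s (uU DQ r.2))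
        & (forall r : uce_T DM * uce_T DQ,
             uU DG (tau r.1 + sigma r.2) = 0 <-> uU DM r.1 = 0 /\ uU DQ r.2 = 0)]
    & forall r : uce_T DM * uce_T DQ,
        tau r.1 + sigma r.2 = 0 <->
        r.2 = 0 /\
        in_span (fun v => exists z k, uU DM k = 0 /\ (v = laU z k \/ v = raU k z)) r.1].
Proof.
exists laU, raU; split.
- by move=> q1 q2 m1 m2; rewrite laU_cls raU_cls.
- exact: uce_action.
- by split; [exact: tau_sigma_hom|exact: tau_sigma_onto].
- split; [exact: uU_tau_sigma_hom|exact: uU_tau_sigma_onto|exact: uU_tau_sigma|].
  exact: uU_tau_sigma_ker.
- move=> [y z] /=; split=> [E|[-> Hy]]; last first.
    by rewrite (lin0 sigl) addr0; exact: span_ker_gens_tau.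
  have [Ey Ez] : tau y = tau 0 /\ z = 0.
    by apply: uce_split_unique; rewrite E (lin0 taul) (lin0 sigl) addr0.
  by split=> //; apply: tau_ker_span; rewrite Ey (lin0 taul).
Qed.
End SplitExtension.

Theorem theorem5p2 (K : fieldType) (M G Q : lmodType K)
  (brM : M -> M -> M) (alM : M -> M)
  (brG : G -> G -> G) (alG : G -> G)
  (brQ : Q -> Q -> Q)
  (t : M -> G) (p : G -> Q) (s : Q -> G)
  (HM : hom_leibniz brM alM) (HG : hom_leibniz brG alG)
  (HQ : hom_leibniz brQ (fun q => q))
  (PM : alpha_perfect brM alM) (PG : alpha_perfect brG alG)
  (PQ : alpha_perfect brQ (fun q => q))
  (Ht : hl_hom brM alM brG alG t) (Hp : hl_hom brG alG brQ (fun q => q) p)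
  (Hs : hl_hom brQ (fun q => q) brG alG s)
  (t_inj : injective t) (p_surj : forall q, exists g, p g = q)
  (exactness : forall g, p g = 0 <-> exists m, t m = g)
  (ps : forall q, p (s q) = q)
  (* the induced Hom-action: q.m = t^{-1}[s q, t m], m.q = t^{-1}[t m, s q] *)
  (actQM : Q -> M -> M) (actMQ : M -> Q -> M)
  (HactQM : forall q m, t (actQM q m) = brG (s q) (t m))
  (HactMQ : forall m q, t (actMQ m q) = brG (t m) (s q))
  (symm : forall q m, actQM q m + actMQ m q = 0)
  (DM : uce_data brM alM) (DG : uce_data brG alG)
  (DQ : uce_data brQ (fun q => q))
  (tau : uce_T DM -> uce_T DG) (sigma : uce_T DQ -> uce_T DG)
  (pi : uce_T DG -> uce_T DQ)
  (Htau : uce_map DM DG t tau) (Hsigma : uce_map DQ DG s sigma)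
  (Hpi : uce_map DG DQ p pi) :
  let inT := fun x : uce_T DG => exists y, tau y = x in
  let inS := fun x : uce_T DG => exists z, sigma z = x in
  (* 1. *)
  [/\ (forall x, inT x <-> pi x = 0),
      (forall y z, inT (ubr DG (tau y) z) /\ inT (ubr DG z (tau y))
                   /\ inT (ual DG (tau y))),
      (forall z1 z2, inS (ubr DG (sigma z1) (sigma z2)))
        /\ (forall z, ual DG (sigma z) = sigma z),
      (forall x, exists y z, x = tau y + sigma z)
        /\ (forall y z, tau y = sigma z -> tau y = 0)
    & hom_action_on inS inT (ubr DG) (ual DG) (ubr DG) (ual DG) (ubr DG) (ubr DG)
      /\ (forall m1 l1 m2 l2, inT m1 -> inS l1 -> inT m2 -> inS l2 ->
           let r := sd_br (ubr DG) (ubr DG) (ual DG) (ubr DG) (ubr DG) (m1, l1) (m2, l2) in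
           inT r.1 /\ inS r.2 /\ r.1 + r.2 = ubr DG (m1 + l1) (m2 + l2))
      /\ (forall m l, inT m -> inS l ->
           let r := sd_al (ual DG) (ual DG) (m, l) in
           inT r.1 /\ inS r.2 /\ r.1 + r.2 = ual DG (m + l))
      /\ (forall x, exists m l, [/\ inT m, inS l & x = m + l])
      /\ (forall m l m' l', inT m -> inS l -> inT m' -> inS l' ->
           m + l = m' + l' -> m = m' /\ l = l')]
  (* 2. *)
  /\ (injective sigma
      /\ (forall z1 z2, sigma (ubr DQ z1 z2) = ubr DG (sigma z1) (sigma z2))
      /\ (forall z, sigma z = ual DG (sigma z)))
  (* 3. *)
  /\ ((forall x, uU DG x = 0 <->
         exists y z, [/\ uU DM y = 0, uU DQ z = 0 & x = tau y + sigma z])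
      /\ (forall y z, uU DM y = 0 -> uU DQ z = 0 -> tau y = sigma z -> tau y = 0))
  (* 4. and 5. *)
  /\ (exists (laU : uce_T DQ -> uce_T DM -> uce_T DM)
             (raU : uce_T DM -> uce_T DQ -> uce_T DM),
      [/\ forall q1 q2 m1 m2,
            laU (ucls DQ q1 q2) (ucls DM (alM m1) (alM m2))
              = ucls DM (actQM (brQ q1 q2) (alM m1)) (alM (alM m2))
                - ucls DM (actQM (brQ q1 q2) (alM m2)) (alM (alM m1))
            /\ raU (ucls DM (alM m1) (alM m2)) (ucls DQ q1 q2)
              = ucls DM (actMQ (alM m1) (brQ q1 q2)) (alM (alM m2))
                - ucls DM (alM (alM m1)) (actQM (brQ q1 q2) (alM m2)),
          hom_action (ubr DQ) (fun z => z) (ubr DM) (ual DM) laU raU,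
          hl_hom (sd_br (ubr DM) (ubr DQ) (fun z => z) laU raU)
              (sd_al (ual DM) (fun z => z)) (ubr DG) (ual DG)
              (fun r : uce_T DM * uce_T DQ => tau r.1 + sigma r.2)
            /\ (forall x, exists r : uce_T DM * uce_T DQ, tau r.1 + sigma r.2 = x),
          [/\ hl_hom (sd_br (ubr DM) (ubr DQ) (fun z => z) laU raU)
                  (sd_al (ual DM) (fun z => z)) brG alG
                  (fun r : uce_T DM * uce_T DQ => uU DG (tau r.1 + sigma r.2)),
              (forall g, exists r : uce_T DM * uce_T DQ, uU DG (tau r.1 + sigma r.2) = g),
              (forall r : uce_T DM * uce_T DQ,
                 uU DG (tau r.1 + sigma r.2) = t (uU DM r.1) + s (uU DQ r.2))
            & (forall r : uce_T DM * uce_T DQ,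
                 uU DG (tau r.1 + sigma r.2) = 0 <-> uU DM r.1 = 0 /\ uU DQ r.2 = 0)]
        & forall r : uce_T DM * uce_T DQ,
            tau r.1 + sigma r.2 = 0 <->
            r.2 = 0 /\
            in_span (fun v => exists z k, uU DM k = 0 /\ (v = laU z k \/ v = raU k z)) r.1]).
Proof.
move=> inT inS.
split; last split; last split.
- split; first by apply: in_tau_ker_pi; eassumption.
  + by apply: tau_ideal; eassumption.
  + by split; [apply: sigma_subalgebra|apply: sigma_al]; eassumption.
  + by split; [apply: uce_split|apply: tau_sigma_direct]; eassumption.
  + by apply: internal_semidirect; eassumption.
- by apply: sigma_embedding; eassumption.
- by apply: kerU_split; eassumption.
- by apply: semidirect_presentation; eassumption.
Qed.
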